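(* Let $G$ be a hypo-unique domination graph. Then either $G=K_2$, or $G$ is a connected vertex domination-critical graph with $|V(G)|\geq 4$.
   Context: All graphs are finite, simple and undirected. A set $D\subseteq V(G)$ is dominating if every vertex of $G$ not in $D$ has a neighbor in $D$; $\gamma(G)$ is the minimum size of a dominating set, and a dominating set of size $\gamma(G)$ is a $\gamma$-set. A vertex $v$ is $\gamma$-critical if $\gamma(G-v)<\gamma(G)$; $G$ is a vertex domination-critical graph (vc-graph) if every vertex of $G$ is $\gamma$-critical. $G$ is a hypo-unique domination graph (hypo-$\mathcal{UD}$ graph) if $G$ has at least two $\gamma$-sets but for every $v\in V(G)$ the graph $G-v$ has exactly one $\gamma$-set. *)

From mathcomp Require Import all_boot.
Set Implicit Arguments. Unset Strict Implicit. Unset Printing Implicit Defensive.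

(* A finite simple graph: vertex type T : finType, adjacency e : rel T,
   assumed symmetric and irreflexive (as hypotheses of the theorem). *)
Section Dom.
Variables (T : finType) (e : rel T).

Definition dominates_in (S D : {set T}) : bool :=
  (D \subset S) && [forall x in S :\: D, exists y in D, e x y].

(* domination number of G[S]: minimum size of a dominating set
   (S itself always dominates G[S]). *)
Definition gamma_in (S : {set T}) : nat :=
  #|[arg min_(D < S | dominates_in S D) #|D|]|.

Definition gamma_set_in (S D : {set T}) : bool :=
  dominates_in S D && (#|D| == gamma_in S).

Definition gamma : nat := gamma_in setT.
Definition gamma_del (v : T) : nat := gamma_in [set~ v].

Definition vc_graph : Prop := forall v : T, gamma_del v < gamma.

Definition hypo_UD : Prop :=
  1 < #|[set D | gamma_set_in setT D]| /\
  forall v : T, #|[set D | gamma_set_in [set~ v] D]| = 1.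

Definition is_K2 : Prop := #|T| = 2 /\ forall x y : T, x != y -> e x y.

Definition connected_graph : Prop := forall x y : T, connect e x y.
End Dom.

From mathcomp Require Import all_boot.
Set Implicit Arguments. Unset Strict Implicit. Unset Printing Implicit Defensive.

(* Everything rests on the uniqueness of the gamma-set of each G - v.  If v is
   not critical, every gamma-set of G avoiding v is a gamma-set of G - v, so at
   most one gamma-set of G avoids v.  Trading a vertex a of the gamma-set of
   G - w for a neighbour y would give a second one, so a always has an external
   private neighbour other than y.  From this, a noncritical vertex has no
   critical neighbour, and a noncritical vertex v would carry two pendant
   private neighbours which, replaced by v itself, give a dominating set of
   size gamma - 1: G is vertex-critical.  The gamma-sets of G and of G - v agree
   on every component missing v, which forces the two distinct gamma-sets of G
   to live in one component.  Finally, a vertex-critical graph without isolated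
   vertices has gamma >= 2, and by Ore's argument at least 2 gamma vertices. *)

Section Domination.
Variables (T : finType) (e : rel T).

Local Notation critical v := (gamma_del e v < gamma e).
Local Notation noncritical v := (gamma e <= gamma_del e v).

Lemma dominatesP (S D : {set T}) :
  reflect (D \subset S /\ forall x, x \in S -> x \notin D -> exists2 y, y \in D & e x y)
    (dominates_in e S D).
Proof.
apply: (iffP andP) => [[sDS /forallP domD]|[sDS domD]]; split => //.
- move=> x xS xD; have /implyP := domD x; rewrite in_setD xS xD => /(_ isT).
  by case/existsP => y /andP[yD exy]; exists y.
- apply/forallP => x; apply/implyP; rewrite in_setD => /andP[xD xS].
  by have [y yD exy] := domD x xS xD; apply/existsP; exists y; rewrite yD.
Qed.

Lemma dominatesTP (D : {set T}) :
  reflect (forall x, x \notin D -> exists2 y, y \in D & e x y) (dominates_in e setT D).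
Proof.
apply: (iffP (dominatesP _ _)) => [[_ domD] x|domD]; first exact: domD.
by split=> [|x _]; [exact: subsetT | exact: domD].
Qed.

Lemma dominates_delP (w : T) (D : {set T}) :
  reflect (w \notin D /\ forall x, x != w -> x \notin D -> exists2 y, y \in D & e x y)
    (dominates_in e [set~ w] D).
Proof.
apply: (iffP (dominatesP _ _)) => [[sDS domD]|[wD domD]]; split.
- by apply/negP => /(subsetP sDS); rewrite in_setC1 eqxx.
- by move=> x xw; apply: domD; rewrite in_setC1.
- by apply/subsetP => x xD; rewrite in_setC1; apply: contraNneq wD => <-.
- by move=> x; rewrite in_setC1; apply: domD.
Qed.

Lemma dominates_in_refl (S : {set T}) : dominates_in e S S.
Proof. by apply/dominatesP; split=> // x ->. Qed.

Lemma gamma_in_min (S D : {set T}) : dominates_in e S D -> gamma_in e S <= #|D|.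
Proof.
move=> domD; rewrite /gamma_in; case: arg_minnP; first exact: dominates_in_refl.
by move=> D0 _; apply.
Qed.

Lemma gamma_setP (S D : {set T}) :
  reflect (dominates_in e S D /\ #|D| = gamma_in e S) (gamma_set_in e S D).
Proof. by apply: (iffP andP) => [[-> /eqP]|[-> ->]]. Qed.

Lemma exists_gamma_set (S : {set T}) : exists D, gamma_set_in e S D.
Proof.
suff [D domD cardD] : exists2 D, dominates_in e S D & #|D| = gamma_in e S.
  by exists D; apply/gamma_setP.
rewrite /gamma_in; case: arg_minnP; first exact: dominates_in_refl.
by move=> D0 domD0 _; exists D0.
Qed.

Lemma gamma_setW (S D : {set T}) :
  dominates_in e S D -> #|D| <= gamma_in e S -> gamma_set_in e S D.
Proof.
move=> domD leD; apply/gamma_setP; split => //.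
by apply/eqP; rewrite eqn_leq leD gamma_in_min.
Qed.

Lemma gamma_set_dom (S D : {set T}) : gamma_set_in e S D -> dominates_in e S D.
Proof. by case/andP. Qed.

Lemma gamma_set_card (S D : {set T}) : gamma_set_in e S D -> #|D| = gamma_in e S.
Proof. by case/gamma_setP. Qed.

Definition private_nbr (a : T) (D : {set T}) (z : T) : bool :=
  [&& z \notin D, e z a & [forall t in D, e z t ==> (t == a)]].

Lemma private_nbrP (a : T) (D : {set T}) (z : T) :
  reflect [/\ z \notin D, e z a & forall t, t \in D -> e z t -> t = a]
    (private_nbr a D z).
Proof.
apply: (iffP and3P) => [[zD eza /forall_inP onlya]|[zD eza onlya]]; split=> //.
  by move=> t tD ezt; apply/eqP; apply: (implyP (onlya t tD)).
by apply/forall_inP => t tD; apply/implyP => ezt; rewrite (onlya t tD ezt).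
Qed.

Lemma dominated_or_private (a z : T) (D : {set T}) :
  z \notin D -> (exists2 t, t \in D & e z t) ->
  (exists2 t, t \in D :\ a & e z t) \/ private_nbr a D z.
Proof.
move=> zD [t tD ezt].
have [/exists_inP[t' t'Da ezt']|/exists_inPn noDa] := boolP [exists t' in D :\ a, e z t'].
  by left; exists t'.
right; have onlya t' : t' \in D -> e z t' -> t' = a.
  move=> t'D ezt'; apply/eqP; apply: contraTT ezt' => t'a.
  by apply: noDa; rewrite in_setD1 t'a t'D.
by apply/private_nbrP; split=> //; rewrite -(onlya t).
Qed.

Lemma dominates_del (w : T) (D : {set T}) :
  dominates_in e setT D -> w \notin D -> dominates_in e [set~ w] D.
Proof. by move=> /dominatesTP domD wD; apply/dominates_delP; split=> // x _; apply: domD. Qed.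

Lemma dominates_setU1_del (w : T) (D : {set T}) :
  dominates_in e [set~ w] D -> dominates_in e setT (w |: D).
Proof.
move=> /dominates_delP[_ domD]; apply/dominatesTP => x; rewrite in_setU1 negb_or.
case/andP=> xw xD; have [y yD exy] := domD x xw xD.
by exists y; rewrite ?setU1r.
Qed.

Lemma dominates_setU1_nbr (w y : T) (D : {set T}) :
  dominates_in e [set~ w] D -> e w y -> dominates_in e setT (y |: D).
Proof.
move=> /dominates_delP[_ domD] ewy; apply/dominatesTP => x; rewrite in_setU1 negb_or.
case/andP=> xy xD; have [->|xw] := eqVneq x w; first by exists y; rewrite ?setU11.
by have [t tD ext] := domD x xw xD; exists t; rewrite ?setU1r.
Qed.

Lemma dominates_swap (w a y : T) (D : {set T}) :
  dominates_in e [set~ w] D -> a \in D -> y != w -> e a y ->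
  (forall z, z != w -> z != y -> ~~ private_nbr a D z) ->
  dominates_in e [set~ w] (y |: (D :\ a)).
Proof.
move=> /dominates_delP[wD domD] aD yw eay noprv; apply/dominates_delP; split.
  by rewrite in_setU1 in_setD1 negb_or eq_sym yw (negbTE wD) andbF.
move=> z zw; rewrite in_setU1 in_setD1 negb_or => /andP[zy zDa].
have [->|za] := eqVneq z a; first by exists y; rewrite ?setU11.
have zD : z \notin D by move: zDa; rewrite za.
case: (dominated_or_private a zD (domD z zw zD)) => [[t tDa ezt]|prv].
  by exists t; rewrite ?setU1r.
by have := noprv z zw zy; rewrite prv.
Qed.

Lemma card_swap (a y : T) (D : {set T}) : a \in D -> #|y |: (D :\ a)| <= #|D|.
Proof. by move=> aD; rewrite cardsU1 (cardsD1 a D) aD; case: (y \notin D :\ a). Qed.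

Lemma gamma_lt_two_pendants (w a b : T) (D : {set T}) :
  dominates_in e [set~ w] D -> a \in D -> b \in D -> a != b -> e a w -> e b w ->
  (forall z, e z a -> z = w) -> (forall z, e z b -> z = w) -> gamma e < #|D|.
Proof.
move=> /dominates_delP[_ domD] aD bD ab eaw ebw pend_a pend_b.
set D' := w |: (D :\ a :\ b).
have domD' : dominates_in e setT D'.
  apply/dominatesTP => z.
  have [->|za] := eqVneq z a; first by exists w; rewrite ?setU11.
  have [->|zb] := eqVneq z b; first by exists w; rewrite ?setU11.
  rewrite in_setU1 !in_setD1 za zb negb_or /= => /andP[zw zD].
  have [t tD ezt] := domD z zw zD.
  have ta : t != a by apply: contra_neq zw => ta; apply: pend_a; rewrite -ta.
  have tb : t != b by apply: contra_neq zw => tb; apply: pend_b; rewrite -tb.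
  by exists t; rewrite // setU1r // !in_setD1 ta tb.
have cardD' : #|D'| < #|D|.
  have bDa : b \in D :\ a by rewrite in_setD1 eq_sym ab.
  rewrite cardsU1 (cardsD1 a D) aD (cardsD1 b (D :\ a)) bDa.
  by case: (w \notin _).
exact: leq_ltn_trans (gamma_in_min domD') cardD'.
Qed.

Lemma gamma_set_del_avoid (v : T) (D : {set T}) : noncritical v ->
  gamma_set_in e setT D -> v \notin D -> gamma_set_in e [set~ v] D.
Proof.
move=> ncv /gamma_setP[domD cardD] vD; apply: gamma_setW; first exact: dominates_del.
by rewrite cardD.
Qed.

Lemma critical_gamma_set (v : T) (S : {set T}) : critical v ->
  gamma_set_in e [set~ v] S ->
  [/\ #|S|.+1 = gamma e, v \notin S, gamma_set_in e setT (v |: S)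
    & forall y, e v y -> y \notin S /\ gamma_set_in e setT (y |: S)].
Proof.
move=> crv /gamma_setP[domS cardS].
have /dominates_delP[vS _] := domS.
have ltS : #|S| < gamma e by rewrite cardS.
have cardvS : #|S|.+1 = gamma e.
  apply/eqP; rewrite eqn_leq ltS /=.
  by have := gamma_in_min (dominates_setU1_del domS); rewrite cardsU1 vS add1n.
split=> //; first by apply: gamma_setW; rewrite ?dominates_setU1_del // cardsU1 vS.
move=> y evy; have domyS := dominates_setU1_nbr domS evy.
have yS : y \notin S.
  apply: contraTN ltS => yS; rewrite -leqNgt.
  by have := gamma_in_min domyS; rewrite (setUidPr _) ?sub1set.
by split=> //; apply: gamma_setW; rewrite // cardsU1 yS.
Qed.

Lemma exists_private_nbr (v : T) (E : {set T}) : noncritical v ->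
  gamma_set_in e setT E -> v \in E -> exists p, private_nbr v E p.
Proof.
move=> ncv /gamma_setP[/dominatesTP domE cardE] vE.
have [/existsP[p prv]|/existsPn noprv] := boolP [exists p, private_nbr v E p].
  by exists p.
have domEv : dominates_in e [set~ v] (E :\ v).
  apply/dominates_delP; split=> [|z zv]; first by rewrite !inE eqxx.
  rewrite in_setD1 zv /= => zE.
  by case: (dominated_or_private v zE (domE z zE)) => // prv; have := noprv z; rewrite prv.
have := leq_trans ncv (gamma_in_min domEv).
by rewrite /gamma -cardE (cardsD1 v E) vE ltnn.
Qed.

End Domination.

Section Graph.
Variables (T : finType) (e : rel T).
Hypotheses (e_sym : symmetric e) (e_irr : irreflexive e).

Lemma connected_edge_out (A : {set T}) (x y : T) :
  connected_graph e -> x \in A -> y \notin A -> exists a b, [/\ a \in A, b \notin A & e a b].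
Proof.
move=> conn xA yA.
have [/existsP[a /andP[aA /existsP[b /andP[bA eab]]]]|/existsPn noout] :=
  boolP [exists a in A, exists b in ~: A, e a b].
  by exists a, b; rewrite -in_setC.
have noedge u v : u \in A -> v \notin A -> ~~ e u v.
  by move=> uA vA; have := noout u; rewrite uA /= => /existsPn/(_ v); rewrite in_setC vA.
suff : (x \in A) = (y \in A) by rewrite xA (negbTE yA).
apply: closed_connect (conn x y) => a b eab.
apply/idP/idP => [aA|bA]; apply: contraT => nA.
- by have := noedge a b aA nA; rewrite eab.
- by have := noedge b a bA nA; rewrite e_sym eab.
Qed.

Lemma connected_nbr (x : T) : connected_graph e -> 1 < #|T| -> exists y, e x y.
Proof.
move=> conn /card_gt1P[y1 [y2 [_ _ y12]]].
have [z zx] : exists z, z != x.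
  by case: (eqVneq y1 x) => [y1x|]; [exists y2; rewrite -y1x eq_sym | exists y1].
have zx' : z \notin [set x] by rewrite in_set1.
by have [a [y [/set1P -> _ exy]]] := connected_edge_out conn (set11 x) zx'; exists y.
Qed.

Lemma pendant_other_nbr (x p : T) : connected_graph e -> 2 < #|T| ->
  (forall y, e p y -> y = x) -> exists2 u, e x u & u != p.
Proof.
move=> conn card3 pend.
have [z zxp] : exists z, z \notin [set x; p].
  have : 0 < #|~: [set x; p]|.
    rewrite -(ltn_add2l #|[set x; p]|) addn0 cardsC.
    by apply: leq_ltn_trans card3; rewrite cards2; case: (x != p).
  by case/card_gt0P => z; rewrite inE; exists z.
have [a [u [/set2P[->|->] uxp eau]]] := connected_edge_out conn (set21 x p) zxp.
  by exists u => //; apply: contraNneq uxp => ->; rewrite set22.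
by move: uxp; rewrite (pend u eau) set21.
Qed.

Lemma dominates_splice (C X Y A B : {set T}) : closed e C ->
  dominates_in e X A -> dominates_in e Y B ->
  dominates_in e ((X :\: C) :|: (Y :&: C)) ((A :\: C) :|: (B :&: C)).
Proof.
move=> clC /dominatesP[sAX domA] /dominatesP[sBY domB]; apply/dominatesP; split.
  by apply: setUSS; [apply: setSD | apply: setSI].
move=> z; rewrite !inE !negb_or; case zC: (z \in C); rewrite /= ?andbT ?andbF ?orbF /= ?andbT.
- move=> zY zB; have [t tB ezt] := domB z zY zB.
  by exists t; rewrite // !inE tB -(clC z t ezt) zC orbT.
- move=> zX zA; have [t tA ezt] := domA z zX zA.
  by exists t; rewrite // !inE tA -(clC z t ezt) zC.
Qed.

Lemma gamma_set_compl_dominates (D : {set T}) : (forall x, exists y, e x y) ->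
  gamma_set_in e setT D -> dominates_in e setT (~: D).
Proof.
move=> nbr /gamma_setP[/dominatesTP domD cardD]; apply/dominatesTP => x; rewrite inE negbK => xD.
have [/existsP[y /andP[yD exy]]|/existsPn allD] := boolP [exists y in ~: D, e x y].
  by exists y.
have nbrD y : e x y -> y \in D.
  by move=> exy; have := allD y; rewrite exy andbT inE negbK.
have [w exw] := nbr x.
have wx : w != x by apply: contraTneq exw => ->; rewrite e_irr.
have domDx : dominates_in e setT (D :\ x).
  apply/dominatesTP => z; rewrite in_setD1 negb_and negbK => /orP[/eqP ->|zD].
    by exists w; rewrite // in_setD1 wx nbrD.
  have [t tD ezt] := domD z zD.
  exists t; rewrite // in_setD1 tD andbT.
  by apply: contraNneq zD => tx; apply: nbrD; rewrite -tx e_sym.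
have := gamma_in_min domDx; rewrite -cardD (cardsD1 x D) xD.
by rewrite ltnn.
Qed.

Lemma double_gamma_le_card : (forall x, exists y, e x y) -> (gamma e).*2 <= #|T|.
Proof.
move=> nbr; have [D gD] := exists_gamma_set e setT.
have /gamma_setP[_ cardD] := gD.
rewrite -(cardsC D) -addnn {1}/gamma -cardD leq_add2l.
exact: gamma_in_min (gamma_set_compl_dominates nbr gD).
Qed.

End Graph.

Lemma vc_gamma_gt1 (T : finType) (e : rel T) : vc_graph e -> 1 < #|T| -> 1 < gamma e.
Proof.
move=> vc /card_gt1P[v [z [_ _ zv]]]; apply: leq_trans (vc v).
rewrite ltnS lt0n; apply: contra_neq zv => gv0.
have [S /gamma_setP[/dominates_delP[_ domS] cardS]] := exists_gamma_set e [set~ v].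
have S0 : S = set0 by apply/eqP; rewrite -cards_eq0 cardS -/(gamma_del e v) gv0.
apply/esym/eqP; apply: contraT => zv.
have zS : z \notin S by rewrite S0 inE.
by have [t] := domS z zv zS; rewrite S0 inE.
Qed.

Section HypoUniqueDomination.
Variables (T : finType) (e : rel T).
Hypotheses (e_sym : symmetric e) (e_irr : irreflexive e) (hUD : hypo_UD e).

Local Notation critical v := (gamma_del e v < gamma e).
Local Notation noncritical v := (gamma e <= gamma_del e v).
Local Notation gamma_set := (gamma_set_in e setT).
Local Notation gamma_set_del v := (gamma_set_in e [set~ v]).

Lemma gamma_set_del_uniq (v : T) (D1 D2 : {set T}) :
  gamma_set_del v D1 -> gamma_set_del v D2 -> D1 = D2.
Proof.
case: hUD => _ /(_ v) /eqP; rewrite eqn_leq => /andP[/card_le1_eqP uniqv _] gD1 gD2.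
by apply: uniqv; rewrite inE.
Qed.

Lemma exists_two_gamma_sets : exists D1 D2, [/\ gamma_set D1, gamma_set D2 & D1 != D2].
Proof.
case: hUD => /card_gt1P[D1 [D2 [gD1 gD2 D12]]] _.
by exists D1, D2; rewrite !inE in gD1 gD2.
Qed.

Lemma gamma_set_avoid_uniq (v : T) (D1 D2 : {set T}) : noncritical v ->
  gamma_set D1 -> gamma_set D2 -> v \notin D1 -> v \notin D2 -> D1 = D2.
Proof.
by move=> ncv gD1 gD2 vD1 vD2; apply: (@gamma_set_del_uniq v); apply: gamma_set_del_avoid.
Qed.

Lemma mem_gamma_set (x : T) : exists2 D, gamma_set D & x \in D.
Proof.
have [/exists_inP[D gD xD]|/exists_inPn noD] := boolP [exists D in [set D | gamma_set D], x \in D].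
  by exists D; rewrite inE in gD.
have [S gS] := exists_gamma_set e [set~ x].
have [crx|ncx] := ltnP (gamma_del e x) (gamma e).
  have [_ _ gxS _] := critical_gamma_set crx gS.
  by have := noD (x |: S); rewrite inE gxS setU11 => /(_ isT).
have [D1 [D2 [gD1 gD2 /eqP[]]]] := exists_two_gamma_sets.
by apply: (gamma_set_avoid_uniq ncx) => //; apply: noD; rewrite inE.
Qed.

(* Otherwise y |: (D :\ a) would be a second gamma-set of G - w. *)
Lemma other_private_nbr (w a y : T) (D : {set T}) :
  gamma_set_del w D -> a \in D -> e a y -> y != w ->
  exists z, [/\ z != w, z != y & private_nbr e a D z].
Proof.
move=> gD aD eay yw.
have [/existsP[z /and3P[zw zy prv]]|/existsPn noprv] :=
  boolP [exists z, [&& z != w, z != y & private_nbr e a D z]].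
  by exists z.
have dom : dominates_in e [set~ w] (y |: (D :\ a)).
  apply: dominates_swap (gamma_set_dom gD) aD yw eay _ => z zw zy.
  by have := noprv z; rewrite zw zy.
have gD' : gamma_set_del w (y |: (D :\ a)).
  by apply: gamma_setW dom _; rewrite -(gamma_set_card gD) card_swap.
have := aD; rewrite -(gamma_set_del_uniq gD' gD) in_setU1 in_setD1 eqxx orbF.
by move/eqP=> ay; move: eay; rewrite ay e_irr.
Qed.

Lemma critical_nbr_pendant (x p : T) : noncritical x -> e x p -> critical p ->
  forall y, e p y -> y = x.
Proof.
move=> ncx exp crp y epy; apply/eqP; apply: contraT => yx.
have [S gS] := exists_gamma_set e [set~ p].
have [_ pS gpS nbrS] := critical_gamma_set crp gS.
have epx : e p x by rewrite e_sym.
have [xS _] := nbrS x epx.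
have [_ gyS] := nbrS y epy.
have xp : x != p by apply: contraTneq exp => ->; rewrite e_irr.
have := gamma_set_avoid_uniq ncx gpS gyS.
rewrite !in_setU1 (negbTE xp) eq_sym (negbTE yx) (negbTE xS) => /(_ isT isT) /setP /(_ p).
by rewrite setU11 in_setU1 (negbTE pS) orbF => /esym/eqP yp; move: epy; rewrite yp e_irr.
Qed.

Lemma critical_nbrs_eq (u q1 q2 : T) : noncritical u -> e u q1 -> e u q2 ->
  critical q1 -> critical q2 -> q1 = q2.
Proof.
move=> ncu euq1 euq2 crq1 crq2; apply/eqP; apply: contraT => q12.
have pendant_del q : e u q -> critical q ->
    exists2 R, gamma_set_del u R & [/\ q \in R, #|R| = gamma e & forall z, e z q -> z = u].
  move=> euq crq; have [S gS] := exists_gamma_set e [set~ q].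
  have [cardS qS gqS nbrS] := critical_gamma_set crq gS.
  have equ : e q u by rewrite e_sym.
  have [uS _] := nbrS u equ.
  have uq : u != q by apply: contraTneq euq => ->; rewrite e_irr.
  exists (q |: S); first by apply: gamma_set_del_avoid ncu gqS _; rewrite in_setU1 negb_or uq.
  split; rewrite ?setU11 ?cardsU1 ?qS ?add1n //.
  by move=> z ezq; apply: (critical_nbr_pendant ncu euq crq); rewrite e_sym.
have [R1 gR1 [q1R1 cardR1 pend1]] := pendant_del q1 euq1 crq1.
have [R2 gR2 [q2R2 _ pend2]] := pendant_del q2 euq2 crq2.
rewrite (gamma_set_del_uniq gR2 gR1) in q2R2.
have eq1u : e q1 u by rewrite e_sym.
have eq2u : e q2 u by rewrite e_sym.
have := gamma_lt_two_pendants (gamma_set_dom gR1) q1R1 q2R2 q12 eq1u eq2u pend1 pend2.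
by rewrite cardR1 ltnn.
Qed.

(* Domination is local to C, so the part of S in C can be replaced by the part
   of D in C and vice versa; minimality and uniqueness then force equality. *)
Lemma gamma_set_setI_closed (C : {set T}) (b : T) (D S : {set T}) :
  closed e C -> b \notin C -> gamma_set D -> gamma_set_del b S -> D :&: C = S :&: C.
Proof.
move=> clC bC gD gS.
have cardU (A B : {set T}) : #|A :|: B| <= #|A| + #|B| by rewrite cardsU leq_subr.
have splitT : setT :\: C :|: [set~ b] :&: C = setT.
  apply/setP => z; rewrite !inE; case zC: (z \in C); rewrite ?andbT //=.
  by apply: contraTneq zC => ->.
have splitb : [set~ b] :\: C :|: setT :&: C = [set~ b].
  apply/setP => z; rewrite !inE; case zC: (z \in C); rewrite ?andbT ?andbF ?orbF //=.
  by apply/esym; apply: contraTneq zC => ->.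
have domDS := dominates_splice clC (gamma_set_dom gD) (gamma_set_dom gS).
have domSD := dominates_splice clC (gamma_set_dom gS) (gamma_set_dom gD).
rewrite splitT in domDS; rewrite splitb in domSD.
have leDC : #|D :&: C| <= #|S :&: C|.
  rewrite -(leq_add2r #|D :\: C|) cardsID (gamma_set_card gD) addnC.
  exact: leq_trans (gamma_in_min domDS) (cardU _ _).
have gSD : gamma_set_del b ((S :\: C) :|: (D :&: C)).
  apply: gamma_setW domSD _; rewrite -(gamma_set_card gS) -(cardsID C S) addnC.
  by apply: leq_trans (cardU _ _) _; rewrite leq_add2l.
apply/setP => z; rewrite -(gamma_set_del_uniq gSD gS) !inE.
by case: (z \in C); rewrite ?andbF ?andbT.
Qed.

Lemma hypo_UD_connected : connected_graph e.
Proof.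
move=> x y; apply: contraT => nxy.
set C := [set z | connect e x z].
have clC : closed e C.
  move=> a b eab; rewrite !inE; apply/idP/idP => xa; apply: connect_trans xa _.
    exact: connect1.
  by apply: connect1; rewrite e_sym.
have clCc : closed e (~: C) by move=> a b eab; rewrite !in_setC (clC a b eab).
have yC : y \notin C by rewrite inE.
have xCc : x \notin ~: C by rewrite !inE negbK connect0.
have [D1 [D2 [gD1 gD2 /eqP[]]]] := exists_two_gamma_sets.
have [Sx gSx] := exists_gamma_set e [set~ x].
have [Sy gSy] := exists_gamma_set e [set~ y].
rewrite -(setID D1 C) -(setID D2 C) !setDE.
rewrite !(gamma_set_setI_closed clC yC _ gSy) //.
by rewrite !(gamma_set_setI_closed clCc xCc _ gSx).
Qed.

Lemma hypo_UD_K2 : #|T| <= 2 -> is_K2 e.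
Proof.
move=> card2.
have [/existsP[a /existsP[b eab]]|/existsPn noedge] := boolP [exists a, exists b, e a b].
  have ab : a != b by apply: contraTneq eab => ->; rewrite e_irr.
  have abT : [set a; b] = setT.
    by apply/eqP; rewrite eqEcard subsetT cardsT cards2 ab.
  have inab z : z \in [set a; b] by rewrite abT inE.
  split; first by rewrite -cardsT -abT cards2 ab.
  move=> x y; move: (inab x) (inab y) => /set2P[]-> /set2P[]->; rewrite ?eqxx //.
  by rewrite e_sym.
have gammaT D : gamma_set D -> D = setT.
  move=> /gamma_set_dom/dominatesTP domD; apply/setP => z; rewrite inE.
  apply: contraT => zD; have [t _ ezt] := domD z zD.
  by have /existsPn/(_ t) := noedge z; rewrite ezt.
have [D1 [D2 [gD1 gD2]]] := exists_two_gamma_sets.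
by rewrite (gammaT _ gD1) (gammaT _ gD2) eqxx.
Qed.

Hypotheses (conn : connected_graph e) (card3 : 2 < #|T|).

Lemma other_nbr_noncritical (x p u : T) : noncritical x -> e x p -> critical p ->
  e x u -> u != p -> noncritical u.
Proof.
move=> ncx exp crp exu up; rewrite leqNgt; apply/negP => cru.
have pend := critical_nbr_pendant ncx exp crp.
have [Su gSu] := exists_gamma_set e [set~ u].
have [_ _ _ nbrSu] := critical_gamma_set cru gSu.
have eux : e u x by rewrite e_sym.
have [xSu _] := nbrSu x eux.
have /dominates_delP[_ domSu] := gamma_set_dom gSu.
have pSu : p \in Su.
  have pu : p != u by rewrite eq_sym.
  apply: contraT => pSu; have [t tSu ept] := domSu p pu pSu.
  by move: tSu; rewrite (pend t ept) (negbTE xSu).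
have epx : e p x by rewrite e_sym.
have xu : x != u by apply: contraTneq exu => ->; rewrite e_irr.
have [z [_ zx /private_nbrP[_ ezp _]]] := other_private_nbr gSu pSu epx xu.
by move: zx; rewrite (pend z _) ?eqxx // e_sym.
Qed.

Lemma noncritical_nbr (x p : T) : noncritical x -> e x p -> noncritical p.
Proof.
move=> ncx exp; rewrite leqNgt; apply/negP => crp.
have [S gS] := exists_gamma_set e [set~ p].
have [_ pS gpS nbrS] := critical_gamma_set crp gS.
have epx : e p x by rewrite e_sym.
have [xS gxS] := nbrS x epx.
have xp : x != p by apply: contraTneq exp => ->; rewrite e_irr.
have gpSx : gamma_set_del x (p |: S).
  by apply: gamma_set_del_avoid ncx gpS _; rewrite in_setU1 negb_or xp.
(* p |: S and x |: S are two gamma-sets avoiding w. *)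
have crit_out w : w \notin S -> w != p -> w != x -> critical w.
  move=> wS wp wx; rewrite ltnNge; apply/negP => ncw.
  have := gamma_set_avoid_uniq ncw gpS gxS; rewrite !in_setU1 !negb_or wp wx wS.
  by move=> /(_ isT isT) /setP /(_ p); rewrite setU11 in_setU1 (negbTE pS) orbF eq_sym (negbTE xp).
have [u exu up] := pendant_other_nbr e_sym conn card3 (critical_nbr_pendant ncx exp crp).
have ncu := other_nbr_noncritical ncx exp crp exu up.
have ux : u != x by apply: contraTneq exu => ->; rewrite e_irr.
have uS : u \in S.
  by apply: contraT => uS; have := crit_out u uS up ux; rewrite ltnNge ncu.
have eux : e u x by rewrite e_sym.
have [z0 [z0p z0x /private_nbrP[z0S ez0u _]]] := other_private_nbr gS uS eux xp.
have uT : u \in p |: S by rewrite setU1r.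
have euz0 : e u z0 by rewrite e_sym.
have [z1 [z1x z1z0 /private_nbrP[z1T ez1u _]]] := other_private_nbr gpSx uT euz0 z0x.
move: z1T; rewrite in_setU1 negb_or => /andP[z1p z1S].
have euz1 : e u z1 by rewrite e_sym.
have := critical_nbrs_eq ncu euz1 euz0 (crit_out _ z1S z1p z1x) (crit_out _ z0S z0p z0x).
by move/eqP; rewrite (negbTE z1z0).
Qed.

Lemma private_nbr_pendant (v p : T) (E : {set T}) :
  noncritical v -> gamma_set E -> v \in E -> private_nbr e v E p ->
  exists F, [/\ gamma_set F, p \in F, v \notin F & forall y, e p y -> y = v].
Proof.
move=> ncv gE vE /private_nbrP[pE epv onlyv].
have ncp : noncritical p by apply: noncritical_nbr ncv _; rewrite e_sym.
have [F gF pF] := mem_gamma_set p.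
have prvF z : private_nbr e p F z -> z = v.
  case/private_nbrP => zF ezp _.
  have ncz : noncritical z by apply: noncritical_nbr ncp _; rewrite e_sym.
  have zE : z \in E.
    apply: contraT => zE; have EF := gamma_set_avoid_uniq ncz gE gF zE zF.
    by move: pE; rewrite EF pF.
  by apply: onlyv zE _; rewrite e_sym.
have [q prvq] := exists_private_nbr ncp gF pF.
have vF : v \notin F by have /private_nbrP[] := prvq; rewrite -(prvF q prvq).
exists F; split=> // y epy; apply/eqP; apply: contraT => yv.
have [z [zv _ prvz]] := other_private_nbr (gamma_set_del_avoid ncv gF vF) pF epy yv.
by move: zv; rewrite (prvF z prvz) eqxx.
Qed.

Lemma hypo_UD_vc : vc_graph e.
Proof.
move=> v; rewrite ltnNge; apply/negP => ncv.
have [E gE vE] := mem_gamma_set v.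
have [p prvp] := exists_private_nbr ncv gE vE.
have [F [gF pF vF pendp]] := private_nbr_pendant ncv gE vE prvp.
have /private_nbrP[pE epv _] := prvp.
have ncp : noncritical p by apply: noncritical_nbr ncv _; rewrite e_sym.
have [u evu up] := pendant_other_nbr e_sym conn card3 pendp.
have [p' [p'p _ prvp']] := other_private_nbr (gamma_set_del_avoid ncp gE pE) vE evu up.
have [F' [gF' p'F' vF' pendp']] := private_nbr_pendant ncv gE vE prvp'.
rewrite -(gamma_set_avoid_uniq ncv gF gF' vF vF') in p'F'.
have /private_nbrP[_ ep'v _] := prvp'.
have pend z : e z p -> z = v by rewrite e_sym; apply: pendp.
have pend' z : e z p' -> z = v by rewrite e_sym; apply: pendp'.
have pp' : p != p' by rewrite eq_sym.
have := gamma_lt_two_pendants (dominates_del (gamma_set_dom gF) vF) pF p'F' pp' epv ep'v pend pend'.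
by rewrite (gamma_set_card gF) ltnn.
Qed.

End HypoUniqueDomination.

Theorem theorem3p1 (T : finType) (e : rel T)
  (e_sym : symmetric e) (e_irr : irreflexive e) :
  hypo_UD e ->
  is_K2 e \/ (connected_graph e /\ vc_graph e /\ 4 <= #|T|).
Proof.
move=> hUD; have conn := hypo_UD_connected e_sym hUD.
have [small|card3] := leqP #|T| 2; [left; exact: hypo_UD_K2 | right].
have card2 : 1 < #|T| := ltnW card3.
have vc := hypo_UD_vc e_sym e_irr hUD conn card3.
split=> //; split=> //.
apply: leq_trans (double_gamma_le_card e_sym e_irr (fun x => connected_nbr e_sym x conn card2)).
by rewrite -[4]/(2.*2) leq_double vc_gamma_gt1.
Qed.
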